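(* Let $d, d_0$ be metrics on a set $E$ such that $d$ takes values in $\lambda \mathbb{Z}$ and $d_0$ takes values in $[0,\lambda)$ for some real $\lambda > 0$. Then $d+d_0$ is a metric on $E$ refining $d$. In particular, if $d$ takes integer values, then $d + d'_{\flat}$ is a metric refining $d$ for any metric $d'$ on $E$, where $d'_\flat = d'/(1+d')$.
   Context: Metrics on $E$ are regarded as functions on the Cartesian product $E \times E$. For functions $f,f'\colon E\times E \to \mathbb{R}$, $f'$ refines $f$ if for all pairs $(x_1,x_2),(x_1',x_2') \in E\times E$ that agree in at least one coordinate, $f(x_1,x_2) < f(x_1',x_2')$ implies $f'(x_1,x_2) < f'(x_1',x_2')$. *)

From Stdlib Require Import Reals ZArith.
Open Scope R_scope.

Definition is_metric {E : Type} (d : E -> E -> R) : Prop :=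
  (forall x y, 0 <= d x y) /\
  (forall x y, d x y = 0 <-> x = y) /\
  (forall x y, d x y = d y x) /\
  (forall x y z, d x z <= d x y + d y z).

Definition refines {E : Type} (f' f : E -> E -> R) : Prop :=
  forall x1 x2 x1' x2' : E,
    (x1 = x1' \/ x2 = x2') ->
    f x1 x2 < f x1' x2' -> f' x1 x2 < f' x1' x2'.

Definition flat {E : Type} (d' : E -> E -> R) : E -> E -> R :=
  fun x y => d' x y / (1 + d' x y).

(* The integer part of d + d0 is d itself: since d0 < lam and d jumps by at
   least lam, any strict increase of d survives the perturbation by d0.  For
   the second statement, t |-> t / (1 + t) is increasing and subadditive on
   [0, +oo), so d'_flat is a metric with values in [0, 1). *)

From Stdlib Require Import Reals ZArith Lra Lia.
Open Scope R_scope.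

Lemma metric_add {E : Type} (d d0 : E -> E -> R) :
  is_metric d -> is_metric d0 -> is_metric (fun x y => d x y + d0 x y).
Proof.
  intros [d_ge0 [d_eq0 [d_sym d_tri]]] [d0_ge0 [d0_eq0 [d0_sym d0_tri]]].
  split; [|split; [|split]].
  - intros x y; specialize (d_ge0 x y); specialize (d0_ge0 x y); lra.
  - intros x y; split.
    + intros Hxy; apply d_eq0; specialize (d_ge0 x y); specialize (d0_ge0 x y); lra.
    + intros <-; rewrite (proj2 (d_eq0 x x) eq_refl), (proj2 (d0_eq0 x x) eq_refl); lra.
  - intros x y; rewrite d_sym, d0_sym; reflexivity.
  - intros x y z; specialize (d_tri x y z); specialize (d0_tri x y z); lra.
Qed.

Lemma lattice_lt_gap (lam : R) (a b : Z) :
  0 < lam -> lam * IZR a < lam * IZR b -> lam * IZR a + lam <= lam * IZR b.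
Proof.
  intros lam_gt0 Hab.
  assert (a_lt_b : (a < b)%Z)
    by (apply lt_IZR, (Rmult_lt_reg_l lam); assumption).
  assert (a1_le_b : IZR a + 1 <= IZR b)
    by (rewrite <- plus_IZR; apply IZR_le; lia).
  apply Rmult_le_compat_l with (r := lam) in a1_le_b; lra.
Qed.

Lemma refines_add_small {E : Type} (d d0 : E -> E -> R) (lam : R) :
  0 < lam ->
  (forall x y, exists k : Z, d x y = lam * IZR k) ->
  (forall x y, 0 <= d0 x y < lam) ->
  refines (fun x y => d x y + d0 x y) d.
Proof.
  intros lam_gt0 d_lattice d0_bound x1 x2 x1' x2' _ Hlt.
  destruct (d_lattice x1 x2) as [a Ha], (d_lattice x1' x2') as [b Hb].
  rewrite Ha, Hb in *.
  pose proof (lattice_lt_gap lam a b lam_gt0 Hlt).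
  pose proof (d0_bound x1 x2); pose proof (d0_bound x1' x2'); lra.
Qed.

Lemma Rdiv_1p_bounds (t : R) : 0 <= t -> 0 <= t / (1 + t) < 1.
Proof.
  intros t_ge0; split.
  - apply Rle_mult_inv_pos; lra.
  - apply (Rmult_lt_reg_r (1 + t)); [lra|].
    unfold Rdiv; rewrite Rmult_assoc, Rinv_l; lra.
Qed.

Lemma Rdiv_1p_eq0 (t : R) : 0 <= t -> t / (1 + t) = 0 -> t = 0.
Proof.
  intros t_ge0 Ht.
  replace t with (t / (1 + t) * (1 + t)) by (field; lra).
  rewrite Ht; ring.
Qed.

Lemma Rdiv_1p_le_compat (s t : R) : 0 <= s -> s <= t -> s / (1 + s) <= t / (1 + t).
Proof.
  intros s_ge0 s_le_t.
  apply (Rmult_le_reg_r ((1 + s) * (1 + t))); [nra|].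
  replace (s / (1 + s) * ((1 + s) * (1 + t))) with (s * (1 + t)) by (field; lra).
  replace (t / (1 + t) * ((1 + s) * (1 + t))) with (t * (1 + s)) by (field; lra).
  lra.
Qed.

Lemma Rdiv_1p_subadditive (s t : R) : 0 <= s -> 0 <= t ->
  (s + t) / (1 + (s + t)) <= s / (1 + s) + t / (1 + t).
Proof.
  intros s_ge0 t_ge0.
  assert (Hs : s / (1 + (s + t)) <= s / (1 + s))
    by (apply Rmult_le_compat_l; [lra|]; apply Rinv_le_contravar; lra).
  assert (Ht : t / (1 + (s + t)) <= t / (1 + t))
    by (apply Rmult_le_compat_l; [lra|]; apply Rinv_le_contravar; lra).
  replace ((s + t) / (1 + (s + t))) with (s / (1 + (s + t)) + t / (1 + (s + t)))
    by (field; lra).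
  lra.
Qed.

Lemma flat_bounds {E : Type} (d' : E -> E -> R) :
  is_metric d' -> forall x y, 0 <= flat d' x y < 1.
Proof. intros [d'_ge0 _] x y; apply Rdiv_1p_bounds, d'_ge0. Qed.

Lemma flat_metric {E : Type} (d' : E -> E -> R) : is_metric d' -> is_metric (flat d').
Proof.
  intros Hd'; pose proof Hd' as [d'_ge0 [d'_eq0 [d'_sym d'_tri]]]; unfold flat.
  split; [|split; [|split]].
  - intros x y; apply (flat_bounds d' Hd').
  - intros x y; split.
    + intros Hxy; apply d'_eq0, Rdiv_1p_eq0; auto.
    + intros <-; rewrite (proj2 (d'_eq0 x x) eq_refl); field.
  - intros x y; rewrite d'_sym; reflexivity.
  - intros x y z.
    eapply Rle_trans; [apply Rdiv_1p_le_compat, d'_tri; apply d'_ge0|].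
    apply Rdiv_1p_subadditive; apply d'_ge0.
Qed.

Theorem proposition4 :
  (forall (E : Type) (d d0 : E -> E -> R) (lam : R),
      0 < lam ->
      is_metric d -> is_metric d0 ->
      (forall x y, exists k : Z, d x y = lam * IZR k) ->
      (forall x y, 0 <= d0 x y < lam) ->
      is_metric (fun x y => d x y + d0 x y) /\
      refines (fun x y => d x y + d0 x y) d)
  /\
  (forall (E : Type) (d d' : E -> E -> R),
      is_metric d -> is_metric d' ->
      (forall x y, exists k : Z, d x y = IZR k) ->
      is_metric (fun x y => d x y + flat d' x y) /\
      refines (fun x y => d x y + flat d' x y) d).
Proof.
  split.
  - intros E d d0 lam lam_gt0 Hd Hd0 d_lattice d0_bound.
    split; [apply metric_add | apply (refines_add_small d d0 lam)]; assumption.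
  - intros E d d' Hd Hd' d_int.
    split; [apply metric_add; [|apply flat_metric]; assumption|].
    apply (refines_add_small d (flat d') 1); [lra| |apply flat_bounds; assumption].
    intros x y; destruct (d_int x y) as [k Hk]; exists k; lra.
Qed.
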